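(* Let $\mathcal{M}$ (mobile devices) and $\mathcal{E}$ (edge servers) be finite nonempty index sets, and let $\hat{D}_{\text{cm},ij}\ge 0$, $\hat{D}_{\text{ES}(s),ij}\ge 0$ and $c_{ij}\in\mathbb{R}$ be given constants for $(i,j)\in\mathcal{M}\times\mathcal{E}$. Let $\mathcal{X}$ be the set of matrices $\mathbf{X}=(x_{ij})\in\{0,1\}^{\mathcal{M}\times\mathcal{E}}$ with $\sum_{j\in\mathcal{E}}x_{ij}\le 1$ for all $i\in\mathcal{M}$, and consider the primal user-association problem $$\min_{\mathbf{X}\in\mathcal{X}} F(\mathbf{X}),\qquad F(\mathbf{X})=\sum_{j\in\mathcal{E}}\Big(\sum_{i\in\mathcal{M}}\sqrt{\hat{D}_{\text{ES}(s),ij}}\,x_{ij}\Big)^2+\sum_{j\in\mathcal{E}}\Big(\sum_{i\in\mathcal{M}}\sqrt{\hat{D}_{\text{cm},ij}}\,x_{ij}\Big)^2+\sum_{i\in\mathcal{M}}\sum_{j\in\mathcal{E}}c_{ij}x_{ij},$$ with optimal value $\hat f^*=\min_{\mathbf{X}\in\mathcal{X}}F(\mathbf{X})$. This is reformulated with slack variables $a_j,b_j\ge 0$ and constraints $\sqrt{a_j}=\sum_{i}\sqrt{\hat{D}_{\text{cm},ij}}x_{ij}$, $\sqrt{b_j}=\sum_i\sqrt{\hat{D}_{\text{ES}(s),ij}}x_{ij}$ ($j\in\mathcal{E}$) and objective $\sum_j(a_j+b_j)+\sum_{i,j}c_{ij}x_{ij}$, whose Lagrangian with multipliers $\boldsymbol{\mu}=(\mu_j)_{j\in\mathcal{E}}$,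 $\boldsymbol{\nu}=(\nu_j)_{j\in\mathcal{E}}$ is $$\mathcal{L}(\mathbf{X},\mathbf{a},\mathbf{b};\boldsymbol{\mu},\boldsymbol{\nu})=\sum_{j}(a_j+b_j)+\sum_{i,j}c_{ij}x_{ij}+\sum_j\mu_j\Big(-\sqrt{a_j}+\sum_i\sqrt{\hat{D}_{\text{cm},ij}}x_{ij}\Big)+\sum_j\nu_j\Big(-\sqrt{b_j}+\sum_i\sqrt{\hat{D}_{\text{ES}(s),ij}}x_{ij}\Big).$$ Define the dual function $$g(\boldsymbol{\mu},\boldsymbol{\nu})=-\sum_{j\in\mathcal{E}}\Big(\frac{\mu_j^2}{4}+\frac{\nu_j^2}{4}\Big)+\sum_{i\in\mathcal{M}}\min\Big\{0,\ \min_{j\in\mathcal{E}}\big(\mu_j\sqrt{\hat{D}_{\text{cm},ij}}+\nu_j\sqrt{\hat{D}_{\text{ES}(s),ij}}+c_{ij}\big)\Big\},$$ let $(\boldsymbol{\mu}^*,\boldsymbol{\nu}^* )$ be a maximizer of $g$, and define the recovered solution $\hat a_j=(\mu_j^* )^2/4$, $\hat b_j=(\nu_j^* )^2/4$, and $\hat{\mathbf{X}}\in\mathcal{X}$ by: for each $i$, $\hat x_{ij}=1$ for $j=\arg\min_{j\in\mathcal{E}}(\mu^*_j\sqrt{\hat{D}_{\text{cm},ij}}+\nu^*_j\sqrt{\hat{D}_{\text{ES}(s),ij}}+c_{ij})$ if this minimum is not larger than $0$, and $\hat x_{ij}=0$ for all other $j$ (all $\hat x_{ij}=0$ if the minimum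 is larger than $0$). Let $$\Delta_j^{(1)}=\sqrt{\hat a_j}-\sum_{i\in\mathcal{M}}\sqrt{\hat{D}_{\text{cm},ij}}\,\hat x_{ij},\qquad \Delta_j^{(2)}=\sqrt{\hat b_j}-\sum_{i\in\mathcal{M}}\sqrt{\hat{D}_{\text{ES}(s),ij}}\,\hat x_{ij}.$$ Then the performance gap between $\hat{\mathbf{X}}$ and the globally optimal solution, $F(\hat{\mathbf{X}})-\hat f^*$, is bounded by $\mathcal{O}\big(\sum_{j\in\mathcal{E}}((\Delta_j^{(1)})^2+(\Delta_j^{(2)})^2)\big)$.
   Context: This arises from a mobile edge computing model: $x_{ij}=1$ means mobile device $i$ offloads its task to edge server $j$, and $x_{ij}=0$ for all $j$ means local computation. The constants are $\hat{D}_{\text{cm},ij}=d_i/R_{ij}$ (task bits over rate), $\hat{D}_{\text{ES}(s),ij}=f_i\rho_i/(F_{\text{ES},j}Z_{\text{ES},j})$, and $c_{ij}$ collects the remaining delay/energy-penalty terms; only the abstract optimization problem above matters for the claim. *)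

From HB Require Import structures.
From mathcomp Require Import all_boot all_order all_algebra.
From mathcomp Require Import reals.
Set Implicit Arguments. Unset Strict Implicit. Unset Printing Implicit Defensive.
Import Order.TTheory GRing.Theory Num.Theory.
Local Open Scope ring_scope.

Section MEC.
Variables (R : realType) (M E : finType).
Implicit Types (X : M -> E -> R) (Dcm Des c : M -> E -> R) (mu nu : E -> R).

Definition feasible X : Prop :=
  (forall i j, X i j = 0 \/ X i j = 1) /\ (forall i, \sum_(j : E) X i j <= 1).

Definition Fobj Dcm Des c X : R :=
  \sum_(j : E) (\sum_(i : M) Num.sqrt (Des i j) * X i j) ^+ 2
  + \sum_(j : E) (\sum_(i : M) Num.sqrt (Dcm i j) * X i j) ^+ 2
  + \sum_(i : M) \sum_(j : E) c i j * X i j.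

Definition is_opt_value Dcm Des c (fstar : R) : Prop :=
  (exists X, feasible X /\ Fobj Dcm Des c X = fstar) /\
  (forall X, feasible X -> fstar <= Fobj Dcm Des c X).

Definition hval Dcm Des c mu nu (i : M) (j : E) : R :=
  mu j * Num.sqrt (Dcm i j) + nu j * Num.sqrt (Des i j) + c i j.

(* dual function g; min{0, min_j h_ij} is the min over {0} U {h_ij}_j *)
Definition dualg Dcm Des c mu nu : R :=
  - \sum_(j : E) (mu j ^+ 2 / 4 + nu j ^+ 2 / 4)
  + \sum_(i : M) \big[Num.min/0]_(j : E) hval Dcm Des c mu nu i j.

Definition recovered Dcm Des c mu nu (Xh : M -> E -> R) : Prop :=
  forall i,
    (exists j0, (forall j, hval Dcm Des c mu nu i j0 <= hval Dcm Des c mu nu i j)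
       /\ hval Dcm Des c mu nu i j0 <= 0
       /\ forall j, Xh i j = (j == j0)%:R)
    \/ ((forall j, 0 < hval Dcm Des c mu nu i j) /\ forall j, Xh i j = 0).

(* Delta^(1)_j with \hat a_j = mu_j^2/4, Delta^(2)_j with \hat b_j = nu_j^2/4 *)
Definition Delta1 Dcm mu (Xh : M -> E -> R) (j : E) : R :=
  Num.sqrt (mu j ^+ 2 / 4) - \sum_(i : M) Num.sqrt (Dcm i j) * Xh i j.
Definition Delta2 Des nu (Xh : M -> E -> R) (j : E) : R :=
  Num.sqrt (nu j ^+ 2 / 4) - \sum_(i : M) Num.sqrt (Des i j) * Xh i j.

End MEC.

From HB Require Import structures.
From mathcomp Require Import all_boot all_order all_algebra.
From mathcomp Require Import reals.
From mathcomp Require Import ring lra.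
Import Order.TTheory GRing.Theory Num.Theory.
Local Open Scope ring_scope.

(* Completing the square column by column, [(s_j)^2 = (s_j - mu_j/2)^2 + mu_j s_j - mu_j^2/4],
   writes F(X) as the Lagrangian part [-sum_j (mu_j^2 + nu_j^2)/4 + sum_ij x_ij h_ij] plus
   the squared constraint residuals [sum_j (s_j - mu_j/2)^2 + (t_j - nu_j/2)^2].  On a
   feasible X the Lagrangian part is at least g(mu, nu) (each row picks at most one h_ij),
   which gives weak duality g <= f*.  On the recovered X it equals g(mu, nu) exactly, and
   at a dual maximizer mu, nu >= 0 (clamping a negative multiplier to 0 only raises g),
   so the residuals are exactly the Delta_j.  Hence F(X^) - f* <= F(X^) - g = sum_j
   (Delta1_j^2 + Delta2_j^2), i.e. the bound holds with constant 1. *)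

Lemma bigmin0_le_sum01 {R : realFieldType} {I : finType} (x F : I -> R) :
  (forall j, x j = 0 \/ x j = 1) -> \sum_j x j <= 1 ->
  \big[Num.min/0]_j F j <= \sum_j x j * F j.
Proof.
move=> x01 sum_le1; set m := \big[Num.min/0]_j F j.
have m_le0 : m <= 0 := bigmin_le_id _ _ _ _.
apply: (@le_trans _ _ ((\sum_j x j) * m)); first nra.
rewrite mulr_suml; apply: ler_sum => j _; apply: ler_wpM2l; last exact: bigmin_le.
by case: (x01 j) => ->.
Qed.

Lemma sqr_max0_min0 {R : realDomainType} (x : R) :
  x ^+ 2 = Num.max x 0 ^+ 2 + Num.min x 0 ^+ 2.
Proof. by case: leP => _; rewrite expr0n /= ?addr0 ?add0r. Qed.

Section UserAssociation.
Context {R : realType} {M E : finType} {Dcm Des c : M -> E -> R}.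
Implicit Types (X : M -> E -> R) (mu nu : E -> R).

Local Notation load D X j := (\sum_(i : M) Num.sqrt (D i j) * X i j).
Local Notation h := (hval Dcm Des c).

Definition row_min mu nu (i : M) : R := \big[Num.min/0]_(j : E) h mu nu i j.

Definition lagrangian_assoc mu nu X : R := \sum_(i : M) \sum_(j : E) X i j * h mu nu i j.

Definition penalty mu nu : R := \sum_(j : E) (mu j ^+ 2 / 4 + nu j ^+ 2 / 4).

Lemma dualgE mu nu : dualg Dcm Des c mu nu = - penalty mu nu + \sum_i row_min mu nu i.
Proof. by []. Qed.

Lemma lagrangian_assocE mu nu X :
  lagrangian_assoc mu nu X =
  \sum_(j : E) (mu j * load Dcm X j + nu j * load Des X j)
  + \sum_(i : M) \sum_(j : E) c i j * X i j.
Proof.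
transitivity (\sum_(i : M) \sum_(j : E) ((mu j * (Num.sqrt (Dcm i j) * X i j)
    + nu j * (Num.sqrt (Des i j) * X i j)) + c i j * X i j)).
  by apply: eq_bigr => i _; apply: eq_bigr => j _; rewrite /hval; ring.
under eq_bigr => i _ do rewrite big_split /=.
rewrite big_split /= exchange_big; congr (_ + _).
by apply: eq_bigr => j _; rewrite big_split /= !mulr_sumr.
Qed.

Lemma FobjE mu nu X :
  Fobj Dcm Des c X =
  - penalty mu nu + lagrangian_assoc mu nu X
  + \sum_(j : E) ((load Dcm X j - mu j / 2) ^+ 2 + (load Des X j - nu j / 2) ^+ 2).
Proof.
have column j : load Des X j ^+ 2 + load Dcm X j ^+ 2 =
    - (mu j ^+ 2 / 4 + nu j ^+ 2 / 4) + (mu j * load Dcm X j + nu j * load Des X j)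
    + ((load Dcm X j - mu j / 2) ^+ 2 + (load Des X j - nu j / 2) ^+ 2).
  by field.
rewrite lagrangian_assocE /Fobj /penalty -big_split (eq_bigr _ (fun j _ => column j)).
by rewrite !big_split /= sumrN big_split /=; ring.
Qed.

Lemma row_min_le_assoc mu nu X :
  feasible X -> \sum_i row_min mu nu i <= lagrangian_assoc mu nu X.
Proof.
move=> [X01 row_le1]; apply: ler_sum => i _.
exact: bigmin0_le_sum01.
Qed.

Lemma dualg_le_Fobj mu nu X : feasible X -> dualg Dcm Des c mu nu <= Fobj Dcm Des c X.
Proof.
move=> X_feas; rewrite dualgE (FobjE mu nu) -addrA lerD2l.
rewrite -[leLHS]addr0 lerD ?row_min_le_assoc //.
by apply: sumr_ge0 => j _; rewrite addr_ge0 ?sqr_ge0.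
Qed.

Lemma recovered_assoc mu nu Xh :
  recovered Dcm Des c mu nu Xh -> lagrangian_assoc mu nu Xh = \sum_i row_min mu nu i.
Proof.
move=> Xh_rec; apply: eq_bigr => i _; rewrite /row_min.
case: (Xh_rec i) => [[j0 [j0_min [hj0_le0 Xh_row]]] | [h_gt0 Xh_row]].
- rewrite (bigD1 j0) //= Xh_row eqxx mul1r big1 ?addr0; last first.
    by move=> j /negbTE j_neq; rewrite Xh_row j_neq mul0r.
  by apply/le_anti; rewrite bigmin_le le_bigmin.
- rewrite big1 ?bigmin_eq_id // => j _; last by rewrite Xh_row mul0r.
  exact: ltW (h_gt0 j).
Qed.

Lemma sqrt_sqr_div4 (m : R) : 0 <= m -> Num.sqrt (m ^+ 2 / 4) = m / 2.
Proof.
move=> m_ge0; rewrite (_ : m ^+ 2 / 4 = (m / 2) ^+ 2); last by field.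
by rewrite sqrtr_sqr ger0_norm ?divr_ge0.
Qed.

Lemma Fobj_recovered {mu nu Xh} :
  recovered Dcm Des c mu nu Xh -> (forall j, 0 <= mu j) -> (forall j, 0 <= nu j) ->
  Fobj Dcm Des c Xh =
  dualg Dcm Des c mu nu + \sum_(j : E) (Delta1 Dcm mu Xh j ^+ 2 + Delta2 Des nu Xh j ^+ 2).
Proof.
move=> Xh_rec mu_ge0 nu_ge0.
rewrite (FobjE mu nu) recovered_assoc // dualgE; congr (_ + _).
apply: eq_bigr => j _.
rewrite /Delta1 /Delta2 !sqrt_sqr_div4 //.
by rewrite -[(_ - mu j / 2) ^+ 2]sqrrN -[(_ - nu j / 2) ^+ 2]sqrrN !opprB.
Qed.

Definition pos_part mu : E -> R := fun j => Num.max (mu j) 0.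

Lemma hval_le_pos_part mu nu i j : h mu nu i j <= h (pos_part mu) (pos_part nu) i j.
Proof.
rewrite /hval /pos_part lerD2r.
by rewrite lerD // ler_wpM2r ?sqrtr_ge0 // le_max lexx.
Qed.

Lemma row_min_le_pos_part mu nu i :
  row_min mu nu i <= row_min (pos_part mu) (pos_part nu) i.
Proof.
apply: le_bigmin => [|j _]; first exact: bigmin_le_id.
exact: le_trans (bigmin_le _ j _) (hval_le_pos_part _ _ _ _).
Qed.

Lemma penalty_pos_part mu nu :
  penalty mu nu = penalty (pos_part mu) (pos_part nu)
    + \sum_(j : E) (Num.min (mu j) 0 ^+ 2 / 4 + Num.min (nu j) 0 ^+ 2 / 4).
Proof.
rewrite /penalty /pos_part -big_split; apply: eq_bigr => j _ /=.
by rewrite (sqr_max0_min0 (mu j)) (sqr_max0_min0 (nu j)); ring.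
Qed.

Lemma dual_maximizer_ge0 {mus nus} :
  (forall mu nu, dualg Dcm Des c mu nu <= dualg Dcm Des c mus nus) ->
  (forall j, 0 <= mus j) /\ (forall j, 0 <= nus j).
Proof.
move=> mus_opt.
set loss := fun j => Num.min (mus j) 0 ^+ 2 / 4 + Num.min (nus j) 0 ^+ 2 / 4.
have loss_ge0 j : 0 <= loss j by rewrite addr_ge0 // divr_ge0 ?sqr_ge0.
have clamp_gain : dualg Dcm Des c mus nus + \sum_j loss j
                  <= dualg Dcm Des c (pos_part mus) (pos_part nus).
  rewrite !dualgE penalty_pos_part.
  have : \sum_i row_min mus nus i <= \sum_i row_min (pos_part mus) (pos_part nus) i.
    by apply: ler_sum => i _; exact: row_min_le_pos_part.
  lra.
have loss_eq0 : \sum_j loss j = 0.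
  apply/le_anti; rewrite sumr_ge0 // andbT.
  have := mus_opt (pos_part mus) (pos_part nus); lra.
have min0_eq0 j : Num.min (mus j) 0 = 0 /\ Num.min (nus j) 0 = 0.
  have /(_ j isT)/eqP := psumr_eq0P (fun j _ => loss_ge0 j) loss_eq0.
  rewrite paddr_eq0 ?divr_ge0 ?sqr_ge0 //.
  rewrite !(mulf_eq0 (_ ^+ 2)) !sqrf_eq0 !invr_eq0 !pnatr_eq0 !orbF.
  by case/andP => /eqP -> /eqP ->.
by split=> j; have [/min_idPr mu_ge0 /min_idPr nu_ge0] := min0_eq0 j.
Qed.

End UserAssociation.

Theorem theorem1 (R : realType) :
  exists C : R, 0 < C /\
  forall (M E : finType) (Dcm Des c : M -> E -> R) (fstar : R)
         (mus nus : E -> R) (Xh : M -> E -> R),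
    (0 < #|M|)%N -> (0 < #|E|)%N ->
    (forall i j, 0 <= Dcm i j) -> (forall i j, 0 <= Des i j) ->
    is_opt_value Dcm Des c fstar ->
    (forall mu nu : E -> R, dualg Dcm Des c mu nu <= dualg Dcm Des c mus nus) ->
    recovered Dcm Des c mus nus Xh ->
    Fobj Dcm Des c Xh - fstar
      <= C * \sum_(j : E) (Delta1 Dcm mus Xh j ^+ 2 + Delta2 Des nus Xh j ^+ 2).
Proof.
exists 1; split => //.
move=> M E Dcm Des c fstar mus nus Xh _ _ _ _ [[Xo [Xo_feas <-]] _]
  mus_opt Xh_rec.
have [mus_ge0 nus_ge0] := dual_maximizer_ge0 mus_opt.
have weak_duality : dualg Dcm Des c mus nus <= Fobj Dcm Des c Xo :=
  dualg_le_Fobj mus nus Xo Xo_feas.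
rewrite mul1r (Fobj_recovered Xh_rec mus_ge0 nus_ge0).
lra.
Qed.
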